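(* Let $I$ be an ideal of a multiplicative Lie algebra $G$. Then $\dfrac{G}{I}\otimes\dfrac{G}{I}\cong\dfrac{G\otimes G}{(I\otimes G)(G\otimes I)}$.
   Context: A multiplicative Lie algebra is a group $(G,\cdot)$ with a binary operation $\star$ such that for all $x,y,z\in G$: $x\star x=1$; $x\star(yz)=(x\star y)\,{}^y(x\star z)$; $(xy)\star z={}^x(y\star z)(x\star z)$; $((x\star y)\star{}^yz)((y\star z)\star{}^zx)((z\star x)\star{}^xy)=1$; ${}^z(x\star y)={}^zx\star{}^zy$, where ${}^xy=xyx^{-1}$. An ideal is a normal subgroup $I$ with $x\star y\in I$ for all $x\in G,y\in I$. The tensor square $G\otimes G$ is the multiplicative Lie algebra generated by symbols $x\otimes y$ ($x,y\in G$) subject to, for all $x,x',y,y'\in G$: $x\otimes(yy')=(x\otimes y)({}^yx\otimes{}^yy')$; $(xx')\otimes y=({}^xx'\otimes{}^xy)(x\otimes y)$; $((x\star x')\otimes{}^{x'}y)({}^yx\otimes(x'\star y))^{-1}({}^xx'\otimes(x\star y)^{-1})^{-1}=1$; $({}^{y'}x\otimes(y\star y'))((y\star x)^{-1}\otimes{}^yy')^{-1}((y'\star x)\otimes{}^xy)^{-1}=1$; and $(x\otimes y)\star(x'\otimes y')=(y\star x)^{-1}\otimes(x'\star y')$. $I\otimes G$ (resp. $G\otimes I$) is the subgroup of $G\otimes G$ generated by all $a\otimes b$ with $a\in I,b\in G$ (resp. $a\in G,b\in I$). *)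

Record mla := MLA {
  carrier :> Type;
  mul : carrier -> carrier -> carrier;
  one : carrier;
  inv : carrier -> carrier;
  star : carrier -> carrier -> carrier;
  mulA : forall x y z, mul x (mul y z) = mul (mul x y) z;
  mul1x : forall x, mul one x = x;
  mulx1 : forall x, mul x one = x;
  mulVx : forall x, mul (inv x) x = one;
  mulxV : forall x, mul x (inv x) = one;
  (* multiplicative Lie algebra axioms, with  ^x y = x y x^-1 *)
  star_xx : forall x, star x x = one;
  star_mulr : forall x y z,
    star x (mul y z) = mul (star x y) (mul y (mul (star x z) (inv y)));
  star_mull : forall x y z,
    star (mul x y) z = mul (mul x (mul (star y z) (inv x))) (star x z);
  star_jacobi : forall x y z,
    mul (mul (star (star x y) (mul y (mul z (inv y))))
             (star (star y z) (mul z (mul x (inv z)))))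
        (star (star z x) (mul x (mul y (inv x)))) = one;
  star_conj : forall x y z,
    mul z (mul (star x y) (inv z)) =
    star (mul z (mul x (inv z))) (mul z (mul y (inv z)))
}.

Arguments mul {m}.
Arguments one {m}.
Arguments inv {m}.
Arguments star {m}.

Definition conj {G : mla} (x y : G) : G := mul x (mul y (inv x)).

Definition is_ideal (G : mla) (I : G -> Prop) : Prop :=
  I one /\
  (forall x y, I x -> I y -> I (mul x y)) /\
  (forall x, I x -> I (inv x)) /\
  (forall g x, I x -> I (conj g x)) /\
  (forall x y, I y -> I (star x y)).

Definition mla_hom {G H : mla} (f : G -> H) : Prop :=
  (forall x y, f (mul x y) = mul (f x) (f y)) /\
  (forall x y, f (star x y) = star (f x) (f y)).

Definition mla_iso {G H : mla} (f : G -> H) : Prop :=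
  mla_hom f /\ (forall x y, f x = f y -> x = y) /\ (forall z, exists x, f x = z).

Definition tensor_rel (G L : mla) (f : G -> G -> L) : Prop :=
  (forall x y y' : G,
     f x (mul y y') = mul (f x y) (f (conj y x) (conj y y'))) /\
  (forall x x' y : G,
     f (mul x x') y = mul (f (conj x x') (conj x y)) (f x y)) /\
  (forall x x' y : G,
     mul (mul (f (star x x') (conj x' y))
              (inv (f (conj y x) (star x' y))))
         (inv (f (conj x x') (inv (star x y)))) = one) /\
  (forall x y y' : G,
     mul (mul (f (conj y' x) (star y y'))
              (inv (f (inv (star y x)) (conj y y'))))
         (inv (f (star y' x) (conj x y))) = one) /\
  (forall x y x' y' : G,
     star (f x y) (f x' y') = f (inv (star y x)) (star x' y')).

(* (T, t) is the tensor square G (x) G: the multiplicative Lie algebra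
   generated by the symbols t x y = x (x) y subject to the relations, i.e.
   it satisfies the relations and is universal for them. *)
Definition is_tensor_square (G T : mla) (t : G -> G -> T) : Prop :=
  tensor_rel G T t /\
  forall (L : mla) (f : G -> G -> L), tensor_rel G L f ->
    (exists h : T -> L, mla_hom h /\ forall x y, h (t x y) = f x y) /\
    (forall h1 h2 : T -> L, mla_hom h1 -> mla_hom h2 ->
       (forall x y, h1 (t x y) = f x y) -> (forall x y, h2 (t x y) = f x y) ->
       forall z, h1 z = h2 z).

Inductive gen_subgroup {T : mla} (S : T -> Prop) : T -> Prop :=
| gs_base : forall x, S x -> gen_subgroup S x
| gs_one : gen_subgroup S one
| gs_mul : forall x y, gen_subgroup S x -> gen_subgroup S y -> gen_subgroup S (mul x y)
| gs_inv : forall x, gen_subgroup S x -> gen_subgroup S (inv x).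

Definition left_tensor {G T : mla} (t : G -> G -> T) (I : G -> Prop) : T -> Prop :=
  gen_subgroup (fun z => exists a b, I a /\ z = t a b).
Definition right_tensor {G T : mla} (t : G -> G -> T) (I : G -> Prop) : T -> Prop :=
  gen_subgroup (fun z => exists a b, I b /\ z = t a b).

Definition IG_GI {G T : mla} (t : G -> G -> T) (I : G -> Prop) : T -> Prop :=
  fun z => exists u v, left_tensor t I u /\ right_tensor t I v /\ z = mul u v.

Definition is_quotient {G Q : mla} (q : G -> Q) (K : G -> Prop) : Prop :=
  mla_hom q /\ (forall y, exists x, q x = y) /\ (forall x, q x = one <-> K x).

(* The composite G x G -> G (x) G -> (G (x) G)/((I (x) G)(G (x) I)) satisfies the
   tensor relations and kills every x (x) y with x or y in I.  Since I is closed
   under conjugation, x (x) y then depends only on the classes of x and y modulo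
   I, so it descends to G/I x G/I and the universal property of (G/I) (x) (G/I)
   gives a map f to the quotient.  Conversely, x (x) y |-> (xI) (x) (yI) is a map
   G (x) G -> (G/I) (x) (G/I) killing (I (x) G)(G (x) I), hence a map g back from
   the quotient.  Both composites fix the generators, so by uniqueness in the
   universal properties f and g are mutually inverse. *)

From Stdlib Require Import ClassicalEpsilon.

Section GroupFacts.
Context {G : mla}.

Lemma mul_idem_one (a : G) : mul a a = a -> a = one.
Proof.
  intro Haa. transitivity (mul (inv a) (mul a a)).
  - rewrite mulA, mulVx, mul1x. reflexivity.
  - rewrite Haa, mulVx. reflexivity.
Qed.

Lemma inv_unique (a b : G) : mul b a = one -> b = inv a.
Proof.
  intro Hba. rewrite <- (mulx1 G b), <- (mulxV G a), mulA, Hba, mul1x. reflexivity.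
Qed.

Lemma eq_of_mulV_one (a b : G) : mul (inv a) b = one -> a = b.
Proof.
  intro Hab. rewrite <- (mulx1 G a), <- Hab, mulA, mulxV, mul1x. reflexivity.
Qed.

Lemma mul_mulV (a b : G) : mul a (mul (inv a) b) = b.
Proof. rewrite mulA, mulxV, mul1x. reflexivity. Qed.

Lemma inv_one : inv (@one G) = one.
Proof. rewrite <- (mul1x G (inv one)), mulxV. reflexivity. Qed.

Lemma conj1x (y : G) : conj one y = y.
Proof. unfold conj. rewrite inv_one, mul1x, mulx1. reflexivity. Qed.

End GroupFacts.

Section Homomorphisms.
Context {G H : mla} (f : G -> H).
Hypothesis Hf : mla_hom f.

Lemma hom_mul (x y : G) : f (mul x y) = mul (f x) (f y).
Proof. exact (proj1 Hf x y). Qed.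

Lemma hom_star (x y : G) : f (star x y) = star (f x) (f y).
Proof. exact (proj2 Hf x y). Qed.

Lemma hom_one : f one = one.
Proof. apply mul_idem_one. rewrite <- hom_mul, mul1x. reflexivity. Qed.

Lemma hom_inv (x : G) : f (inv x) = inv (f x).
Proof. apply inv_unique. rewrite <- hom_mul, mulVx. exact hom_one. Qed.

Lemma hom_conj (x y : G) : f (conj x y) = conj (f x) (f y).
Proof. unfold conj. rewrite !hom_mul, hom_inv. reflexivity. Qed.

Lemma hom_kills_gen_subgroup (S : G -> Prop) :
  (forall s, S s -> f s = one) -> forall z, gen_subgroup S z -> f z = one.
Proof.
  intros HS z Hz. induction Hz as [s Hs | | u v _ IHu _ IHv | u _ IHu].
  - exact (HS s Hs).
  - exact hom_one.
  - rewrite hom_mul, IHu, IHv, mul1x. reflexivity.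
  - rewrite hom_inv, IHu, inv_one. reflexivity.
Qed.

End Homomorphisms.

Lemma hom_comp {A B C : mla} (f : A -> B) (g : B -> C) :
  mla_hom f -> mla_hom g -> mla_hom (fun x => g (f x)).
Proof.
  intros Hf Hg. split; intros x y.
  - rewrite (hom_mul f Hf), (hom_mul g Hg). reflexivity.
  - rewrite (hom_star f Hf), (hom_star g Hg). reflexivity.
Qed.

Lemma hom_id {A : mla} : mla_hom (fun x : A => x).
Proof. split; reflexivity. Qed.

Lemma iso_of_inverse {A B : mla} (f : A -> B) (g : B -> A) :
  mla_hom f -> (forall x, g (f x) = x) -> (forall y, f (g y) = y) -> mla_iso f.
Proof.
  intros Hf gf fg. split; [exact Hf | split].
  - intros x y Exy. rewrite <- (gf x), <- (gf y), Exy. reflexivity.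
  - intro y. exists (g y). apply fg.
Qed.

Lemma surjective_section {A B : Type} (p : A -> B) :
  (forall y, exists x, p x = y) -> exists r : B -> A, forall y, p (r y) = y.
Proof.
  intro Hp. exists (fun y => proj1_sig (constructive_indefinite_description _ (Hp y))).
  intro y. exact (proj2_sig (constructive_indefinite_description _ (Hp y))).
Qed.

Section Quotients.
Context {G Q : mla} (q : G -> Q) (K : G -> Prop).
Hypothesis Hq : is_quotient q K.

Lemma quotient_eq_kernel (x x' : G) : q x = q x' -> K (mul (inv x) x').
Proof.
  destruct Hq as [qh [_ qker]]. intro Exx'. apply qker.
  rewrite (hom_mul q qh), (hom_inv q qh), Exx', mulVx. reflexivity.
Qed.

Lemma quotient_lift (H : mla) (h : G -> H) :
  mla_hom h -> (forall x, K x -> h x = one) ->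
  exists h' : Q -> H, mla_hom h' /\ forall x, h' (q x) = h x.
Proof.
  intros hh hK. destruct Hq as [qh [qsurj _]].
  destruct (surjective_section q qsurj) as [r Hr].
  assert (Hlift : forall x, h (r (q x)) = h x).
  { intro x. apply eq_of_mulV_one. rewrite <- (hom_inv h hh), <- (hom_mul h hh).
    apply hK, quotient_eq_kernel. rewrite Hr. reflexivity. }
  exists (fun y => h (r y)). split; [split | exact Hlift]; intros y y';
    destruct (qsurj y) as [x <-]; destruct (qsurj y') as [x' <-].
  - rewrite <- (hom_mul q qh), !Hlift, (hom_mul h hh). reflexivity.
  - rewrite <- (hom_star q qh), !Hlift, (hom_star h hh). reflexivity.
Qed.

End Quotients.

Section TensorRelations.
Context {G L : mla} (f : G -> G -> L).
Hypothesis Hf : tensor_rel G L f.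

Lemma tensor_rel_mulr (x y y' : G) :
  f x (mul y y') = mul (f x y) (f (conj y x) (conj y y')).
Proof. exact (proj1 Hf x y y'). Qed.

Lemma tensor_rel_mull (x x' y : G) :
  f (mul x x') y = mul (f (conj x x') (conj x y)) (f x y).
Proof. exact (proj1 (proj2 Hf) x x' y). Qed.

Lemma tensor_rel_1x (y : G) : f one y = one.
Proof.
  apply mul_idem_one. pose proof (tensor_rel_mull one one y) as E.
  rewrite mul1x, !conj1x in E. symmetry. exact E.
Qed.

Lemma tensor_rel_x1 (x : G) : f x one = one.
Proof.
  apply mul_idem_one. pose proof (tensor_rel_mulr x one one) as E.
  rewrite mul1x, !conj1x in E. symmetry. exact E.
Qed.

Variable K : G -> Prop.
Hypothesis K_conj : forall g k, K k -> K (conj g k).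

Lemma tensor_rel_invariant_l (x x' y : G) :
  (forall a b, K a -> f a b = one) -> K (mul (inv x) x') -> f x' y = f x y.
Proof.
  intros fK Hk. rewrite <- (mul_mulV x x'), tensor_rel_mull, (fK (conj x _)), mul1x; auto.
Qed.

Lemma tensor_rel_invariant_r (x y y' : G) :
  (forall a b, K b -> f a b = one) -> K (mul (inv y) y') -> f x y' = f x y.
Proof.
  intros fK Hk. rewrite <- (mul_mulV y y'), tensor_rel_mulr, (fK _ (conj y _)), mulx1; auto.
Qed.

End TensorRelations.

Lemma tensor_rel_comp_hom {G T L : mla} (t : G -> G -> T) (h : T -> L) :
  mla_hom h -> tensor_rel G T t -> tensor_rel G L (fun x y => h (t x y)).
Proof.
  intros Hh [H1 [H2 [H3 [H4 H5]]]].
  repeat split; intros; cbv beta.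
  - rewrite H1, (hom_mul h Hh). reflexivity.
  - rewrite H2, (hom_mul h Hh). reflexivity.
  - pose proof (f_equal h (H3 x x' y)) as E.
    rewrite !(hom_mul h Hh), !(hom_inv h Hh), (hom_one h Hh) in E. exact E.
  - pose proof (f_equal h (H4 x y y')) as E.
    rewrite !(hom_mul h Hh), !(hom_inv h Hh), (hom_one h Hh) in E. exact E.
  - rewrite <- (hom_star h Hh), H5. reflexivity.
Qed.

Ltac push_hom p Hp :=
  repeat first [ rewrite (hom_conj p Hp) | rewrite (hom_inv p Hp)
               | rewrite (hom_star p Hp) | rewrite (hom_mul p Hp) ].

Ltac push_hom_in p Hp E :=
  repeat first [ rewrite (hom_conj p Hp) in E | rewrite (hom_inv p Hp) in E
               | rewrite (hom_star p Hp) in E | rewrite (hom_mul p Hp) in E ].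

Lemma tensor_rel_precomp_hom {G H L : mla} (p : G -> H) (f : H -> H -> L) :
  mla_hom p -> tensor_rel H L f -> tensor_rel G L (fun x y => f (p x) (p y)).
Proof.
  intros Hp [H1 [H2 [H3 [H4 H5]]]].
  repeat split; intros; cbv beta; push_hom p Hp; auto.
Qed.

Lemma tensor_rel_descend {G H L : mla} (p : G -> H) (f : H -> H -> L) (F : G -> G -> L) :
  mla_hom p -> (forall y, exists x, p x = y) ->
  (forall x y, f (p x) (p y) = F x y) -> tensor_rel G L F -> tensor_rel H L f.
Proof.
  intros Hp Hs HF [H1 [H2 [H3 [H4 H5]]]].
  repeat split.
  - intros a b c. destruct (Hs a) as [x <-], (Hs b) as [y <-], (Hs c) as [z <-].
    pose proof (H1 x y z) as E. rewrite <- !HF in E. push_hom_in p Hp E. exact E.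
  - intros a b c. destruct (Hs a) as [x <-], (Hs b) as [y <-], (Hs c) as [z <-].
    pose proof (H2 x y z) as E. rewrite <- !HF in E. push_hom_in p Hp E. exact E.
  - intros a b c. destruct (Hs a) as [x <-], (Hs b) as [y <-], (Hs c) as [z <-].
    pose proof (H3 x y z) as E. rewrite <- !HF in E. push_hom_in p Hp E. exact E.
  - intros a b c. destruct (Hs a) as [x <-], (Hs b) as [y <-], (Hs c) as [z <-].
    pose proof (H4 x y z) as E. rewrite <- !HF in E. push_hom_in p Hp E. exact E.
  - intros a b c d.
    destruct (Hs a) as [x <-], (Hs b) as [y <-], (Hs c) as [z <-], (Hs d) as [w <-].
    pose proof (H5 x y z w) as E. rewrite <- !HF in E. push_hom_in p Hp E. exact E.
Qed.

Lemma tensor_rel_factor_quotient {G Q L : mla} (q : G -> Q) (K : G -> Prop)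
    (f : G -> G -> L) :
  is_quotient q K -> (forall g k, K k -> K (conj g k)) -> tensor_rel G L f ->
  (forall a b, K a -> f a b = one) -> (forall a b, K b -> f a b = one) ->
  exists F : Q -> Q -> L, tensor_rel Q L F /\ forall x y, F (q x) (q y) = f x y.
Proof.
  intros Hq K_conj Hf fKl fKr. pose proof Hq as [qh [qsurj _]].
  destruct (surjective_section q qsurj) as [r Hr].
  assert (Hrep : forall x, K (mul (inv (r (q x))) x)).
  { intro x. apply (quotient_eq_kernel q K Hq). apply Hr. }
  assert (HF : forall x y, f (r (q x)) (r (q y)) = f x y).
  { intros x y.
    rewrite <- (tensor_rel_invariant_l f Hf K K_conj _ _ _ fKl (Hrep x)).
    exact (eq_sym (tensor_rel_invariant_r f Hf K K_conj _ _ _ fKr (Hrep y))). }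
  exists (fun a b => f (r a) (r b)). split; [|exact HF].
  exact (tensor_rel_descend q _ f qh qsurj HF Hf).
Qed.

Section TensorSquares.
Context {G T : mla} (t : G -> G -> T).
Hypothesis Ht : is_tensor_square G T t.

Lemma tensor_square_lift (L : mla) (f : G -> G -> L) :
  tensor_rel G L f -> exists h : T -> L, mla_hom h /\ forall x y, h (t x y) = f x y.
Proof. intro Hf. exact (proj1 (proj2 Ht L f Hf)). Qed.

Lemma tensor_square_hom_ext (L : mla) (h1 h2 : T -> L) :
  mla_hom h1 -> mla_hom h2 -> (forall x y, h1 (t x y) = h2 (t x y)) ->
  forall z, h1 z = h2 z.
Proof.
  intros Hh1 Hh2 E.
  exact (proj2 (proj2 Ht L _ (tensor_rel_comp_hom t h2 Hh2 (proj1 Ht))) h1 h2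
           Hh1 Hh2 E (fun _ _ => eq_refl)).
Qed.

Variable I : G -> Prop.

Lemma IG_GI_tensor_l (a b : G) : I a -> IG_GI t I (t a b).
Proof.
  intro Ha. exists (t a b), one. split; [|split].
  - apply gs_base. exists a, b. auto.
  - apply gs_one.
  - rewrite mulx1. reflexivity.
Qed.

Lemma IG_GI_tensor_r (a b : G) : I b -> IG_GI t I (t a b).
Proof.
  intro Hb. exists one, (t a b). split; [|split].
  - apply gs_one.
  - apply gs_base. exists a, b. auto.
  - rewrite mul1x. reflexivity.
Qed.

Lemma hom_kills_IG_GI (L : mla) (h : T -> L) :
  mla_hom h -> (forall a b, I a -> h (t a b) = one) ->
  (forall a b, I b -> h (t a b) = one) -> forall z, IG_GI t I z -> h z = one.
Proof.
  intros Hh hl hr z [u [v [Hu [Hv ->]]]].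
  assert (hu : h u = one).
  { refine (hom_kills_gen_subgroup h Hh _ _ u Hu). intros s [a [b [Ha ->]]]. auto. }
  assert (hv : h v = one).
  { refine (hom_kills_gen_subgroup h Hh _ _ v Hv). intros s [a [b [Hb ->]]]. auto. }
  rewrite (hom_mul h Hh), hu, hv, mul1x. reflexivity.
Qed.

End TensorSquares.

Theorem lemma3p2
  (G : mla) (I : G -> Prop) (HI : is_ideal G I)
  (* GI = G / I *)
  (GI : mla) (pi : G -> GI) (Hpi : is_quotient pi I)
  (* T = G (x) G *)
  (T : mla) (t : G -> G -> T) (Ht : is_tensor_square G T t)
  (* TI = (G/I) (x) (G/I) *)
  (TI : mla) (tI : GI -> GI -> TI) (HtI : is_tensor_square GI TI tI)
  (* R = (G (x) G) / ((I (x) G)(G (x) I)) *)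
  (R : mla) (rho : T -> R) (Hrho : is_quotient rho (IG_GI t I)) :
  exists f : TI -> R, mla_iso f.
Proof.
  destruct HI as [_ [_ [_ [I_conj _]]]].
  pose proof Hpi as [pih [pisurj piker]].
  pose proof Hrho as [rhoh [rhosurj rhoker]].
  destruct (tensor_rel_factor_quotient pi I (fun x y => rho (t x y)) Hpi I_conj
              (tensor_rel_comp_hom t rho rhoh (proj1 Ht))
              (fun a b Ha => proj2 (rhoker _) (IG_GI_tensor_l t I a b Ha))
              (fun a b Hb => proj2 (rhoker _) (IG_GI_tensor_r t I a b Hb)))
    as [F [FR HF]].
  destruct (tensor_square_lift tI HtI R F FR) as [f [fh Hf]].
  destruct (tensor_square_lift t Ht TI (fun x y => tI (pi x) (pi y))
              (tensor_rel_precomp_hom pi tI pih (proj1 HtI))) as [g [gh Hg]].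
  assert (g_kills : forall z, IG_GI t I z -> g z = one).
  { apply (hom_kills_IG_GI t I TI g gh); intros a b Hab; rewrite Hg, (proj2 (piker _) Hab).
    - apply (tensor_rel_1x tI (proj1 HtI)).
    - apply (tensor_rel_x1 tI (proj1 HtI)). }
  destruct (quotient_lift rho _ Hrho TI g gh g_kills) as [g' [g'h Hg']].
  exists f. apply (iso_of_inverse f g' fh).
  - apply (tensor_square_hom_ext tI HtI TI _ _ (hom_comp f g' fh g'h) hom_id).
    intros a b. destruct (pisurj a) as [x <-], (pisurj b) as [y <-].
    rewrite Hf, HF, Hg', Hg. reflexivity.
  - intro r. destruct (rhosurj r) as [z <-]. rewrite Hg'.
    apply (tensor_square_hom_ext t Ht R _ _ (hom_comp g f gh fh) rhoh).
    intros x y. rewrite Hg, Hf, HF. reflexivity.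
Qed.
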